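(* Let $(\mathcal{X},\mathcal{A})$ be a measurable space and $\pi$ a probability distribution of a random pair $(X,Y)$ on $\mathcal{X}\times\{-1,1\}$. Let $1\le\kappa<+\infty$. Then $\pi$ satisfies the margin assumption $\mathrm{MA}(\kappa)$ if and only if $\pi$ satisfies the margin assumption for hinge risk $\mathrm{MAH}(\kappa)$.
   Context: Let $\eta(x)=\mathbb{P}(Y=1\mid X=x)$ and let $f^*(x)=\mathrm{sign}(2\eta(x)-1)$ be the Bayes rule. For a measurable $f:\mathcal{X}\to\{-1,1\}$, $R(f)=\mathbb{P}(Y\neq f(X))$ and $R^*=R(f^* )=\min_f R(f)$. For a measurable $f:\mathcal{X}\to\mathbb{R}$, the hinge risk is $A(f)=\mathbb{E}[\max(1-Yf(X),0)]$ and $A^*=\inf_{f:\mathcal{X}\to\mathbb{R}}A(f)$ (attained at $f^*$). $\pi$ satisfies $\mathrm{MA}(\kappa)$ if there exists $c_0>0$ such that $\mathbb{E}[|f(X)-f^*(X)|]\le c_0(R(f)-R^* )^{1/\kappa}$ for every measurable $f:\mathcal{X}\to\{-1,1\}$. $\pi$ satisfies $\mathrm{MAH}(\kappa)$ if there exists $c>0$ such that $\mathbb{E}[|f(X)-f^*(X)|]\le c(A(f)-A^* )^{1/\kappa}$ for every measurable $f:\mathcal{X}\to[-1,1]$. *)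

From HB Require Import structures.
From mathcomp Require Import all_boot all_order all_algebra.
From mathcomp Require Import all_classical all_reals all_analysis.
Set Implicit Arguments. Unset Strict Implicit. Unset Printing Implicit Defensive.
Import Order.TTheory GRing.Theory Num.Theory.
Local Open Scope classical_set_scope.
Local Open Scope ring_scope.

(* Labels: Y = true encodes the label 1, Y = false encodes the label -1. *)
Definition ylab {R : realType} (b : bool) : R := if b then 1 else -1.

(* eta is a version of P(Y = 1 | X = x) for the joint law pi of (X,Y):
   measurable, [0,1]-valued, and pi(X in A, Y = 1) = E[1_{X in A} eta(X)]. *)
Definition cond_prob_version d (T : measurableType d) (R : realType)
  (pi : probability (T * bool)%type R) (eta : T -> R) : Prop :=
  [/\ measurable_fun setT eta,
      (forall x, 0 <= eta x <= 1) &
      (forall A : set T, measurable A ->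
         pi (A `*` [set true]) = (\int[pi]_(p in A `*` setT) (eta p.1)%:E)%E)].

(* sign, with the convention sign(0) = 1 so that f* : X -> {-1,1} *)
Definition sgn1 {R : realType} (t : R) : R := if 0 <= t then 1 else -1.

Definition bayes {T} {R : realType} (eta : T -> R) (x : T) : R :=
  sgn1 (2 * eta x - 1).

Definition risk d (T : measurableType d) (R : realType)
  (pi : probability (T * bool)%type R) (f : T -> R) : \bar R :=
  pi [set p | ylab p.2 != f p.1].

Definition hinge_risk d (T : measurableType d) (R : realType)
  (pi : probability (T * bool)%type R) (f : T -> R) : \bar R :=
  (\int[pi]_p (Num.max (1 - ylab p.2 * f p.1) 0)%:E)%E.

Definition hinge_risk_star d (T : measurableType d) (R : realType)
  (pi : probability (T * bool)%type R) : \bar R :=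
  ereal_inf [set hinge_risk pi f | f in [set f : T -> R | measurable_fun setT f]].

Definition l1_dist d (T : measurableType d) (R : realType)
  (pi : probability (T * bool)%type R) (eta : T -> R) (f : T -> R) : \bar R :=
  (\int[pi]_p (`| f p.1 - bayes eta p.1 |)%:E)%E.

Definition MA d (T : measurableType d) (R : realType)
  (pi : probability (T * bool)%type R) (eta : T -> R) (kappa : R) : Prop :=
  exists c0 : R, 0 < c0 /\
    forall f : T -> R, measurable_fun setT f ->
      (forall x, f x = 1 \/ f x = -1) ->
      (l1_dist pi eta f <=
        (c0 * (fine (risk pi f - risk pi (bayes eta))) `^ (kappa^-1))%:E)%E.

Definition MAH d (T : measurableType d) (R : realType)
  (pi : probability (T * bool)%type R) (eta : T -> R) (kappa : R) : Prop :=
  exists c : R, 0 < c /\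
    forall f : T -> R, measurable_fun setT f ->
      (forall x, -1 <= f x <= 1) ->
      (l1_dist pi eta f <=
        (c * (fine (hinge_risk pi f - hinge_risk_star pi)) `^ (kappa^-1))%:E)%E.

From HB Require Import structures.
From mathcomp Require Import all_boot all_order all_algebra.
From mathcomp Require Import all_classical all_reals all_analysis.
From mathcomp Require Import measurable_realfun ring lra.
Import Order.TTheory GRing.Theory Num.Theory HBNNSimple.
Local Open Scope ring_scope.

(* Write h = |2 eta - 1| and f* for the Bayes rule.  Conditioning on X,
   R(f) - R* = E[h |f - f*|] / 2 for every classifier f, and, since f* minimises the
   hinge risk pointwise, A(f) - A* = E[h |f - f*|] for every f with values in
   [-1, 1]; hence MAH implies MA.  Conversely, for such an f and t > 0, the
   classifier f_t equal to -f* where h <= t and to f* elsewhere satisfies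
   E|f - f*| <= E|f_t - f*| + E[h |f - f*|] / t and R(f_t) - R* <= t E|f_t - f*| / 2,
   so MA bounds E|f_t - f*|^kappa by a multiple of t E|f_t - f*|.  Taking t of order
   E[h |f - f*|]^((kappa - 1) / kappa) then yields MAH. *)

Section powR_tradeoff.
Context {R : realType}.
Implicit Types k K m a n t u c q : R.

Lemma powR_half_lt {k u n} : 1 <= k -> 0 < u -> 0 <= n ->
  n `^ k <= n * u `^ (k - 1) / 2 -> n < u.
Proof.
move=> k1 u0 n0 hn; rewrite ltNge; apply/negP => un.
have n_gt0 : 0 < n := lt_le_trans u0 un.
have ule : u `^ (k - 1) <= n `^ (k - 1).
  by apply: ge0_ler_powR; rewrite ?nnegrE ?subr_ge0 // ltW.
have : 0 < n * u `^ (k - 1) by rewrite mulr_gt0 ?powR_gt0.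
have : n * u `^ (k - 1) <= n `^ k.
  by rewrite -[n `^ k](mulr_powRB1 n0 (lt_le_trans ltr01 k1)) ler_pM2l.
lra.
Qed.

Lemma le_powR_tradeoff k K m a : 1 <= k -> 0 < K -> 0 <= a ->
  (forall t, 0 < t -> exists2 n, 0 <= n & m <= n + a / t /\ n `^ k <= K * t * n) ->
  m <= (1 + 2 * K) * a `^ k^-1.
Proof.
move=> k1 K0 a0 tradeoff.
have k0 : 0 < k := lt_le_trans ltr01 k1.
(* t = u^(k-1) / (2K) forces n < u; u = a^(1/k) then balances the two terms. *)
have lt_u u : 0 < u -> m < u + 2 * K * a / u `^ (k - 1).
  move=> u0; have p0 : 0 < u `^ (k - 1) by rewrite powR_gt0.
  have t0 : 0 < u `^ (k - 1) / (2 * K) by rewrite divr_gt0 ?mulr_gt0.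
  have [n n0 [mn hn]] := tradeoff _ t0.
  have nu : n < u.
    apply: (powR_half_lt k1 u0 n0).
    by rewrite (le_trans hn) // (_ : K * _ * n = n * u `^ (k - 1) / 2) //; field; rewrite gt_eqF.
  suff -> : 2 * K * a / u `^ (k - 1) = a / (u `^ (k - 1) / (2 * K)) by lra.
  by field; rewrite !gt_eqF.
have [a_gt0|] := ltP 0 a.
  set u := a `^ k^-1; have u0 : 0 < u by rewrite powR_gt0.
  have au : a = u * u `^ (k - 1).
    by rewrite mulr_powRB1 ?ltW // -powRrM mulVf ?gt_eqF // powRr1.
  have := lt_u u u0; rewrite {1}au -mulrA mulfK ?gt_eqF ?powR_gt0 //; lra.
move=> a_le0; have a_eq0 : a = 0 by apply/eqP; rewrite eq_le a_le0 a0.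
rewrite a_eq0 powR0 ?invr_eq0 ?gt_eqF // mulr0 leNgt; apply/negP => m0.
by have := lt_u m m0; rewrite a_eq0 mulr0 mul0r addr0 ltxx.
Qed.

Lemma powR_le_of_le_mul_powRV {k c n q} : 0 < k -> 0 <= c -> 0 <= q -> 0 <= n ->
  n <= c * q `^ k^-1 -> n `^ k <= c `^ k * q.
Proof.
move=> k0 c0 q0 n0 h.
have -> : c `^ k * q = (c * q `^ k^-1) `^ k.
  by rewrite powRM ?powR_ge0 // -powRrM mulVf ?gt_eqF // powRr1.
by apply: (ge0_ler_powR (ltW k0)) h; rewrite nnegrE ?mulr_ge0 ?powR_ge0.
Qed.

End powR_tradeoff.

Section pointwise.
Context {R : realType}.
Implicit Types e y : R.

Lemma sgn1_cases e :
  (0 <= e /\ sgn1 e = 1 /\ `|e| = e) \/ (e < 0 /\ sgn1 e = -1 /\ `|e| = - e).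
Proof. by rewrite /sgn1; case: leP => e0; [left; rewrite ger0_norm | right; rewrite ltr0_norm]. Qed.

Lemma misclassE (b : bool) y : y = 1 \/ y = -1 ->
  ((ylab b != y)%:R : R) = if b then (1 - y) / 2 else (1 + y) / 2.
Proof.
have n1 : (1 : R) != -1 by apply/eqP; lra.
by case: b => -[] ->; rewrite /ylab ?eqxx ?n1 1?eq_sym ?n1 /=; lra.
Qed.

Lemma cond_misclassE {e y} : 0 <= e <= 1 -> y = 1 \/ y = -1 ->
  (1 - y) / 2 * e + (1 + y) / 2 * (1 - e) =
  (1 - `|2 * e - 1|) / 2 + `|2 * e - 1| * `|y - sgn1 (2 * e - 1)| / 2.
Proof.
move=> /andP[e0 e1] y_pm1.
have n2 : `|1 - -1| = 2 :> R /\ `|-1 - 1| = 2 :> R.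
  by rewrite -opprD normrN opprK ger0_norm.
by case: (sgn1_cases (2 * e - 1)) => -[? [-> ->]]; case: y_pm1 => ->;
  rewrite ?subrr ?normr0 ?n2.1 ?n2.2; lra.
Qed.

Lemma cond_hinge_ge {e y} : 0 <= e <= 1 ->
  1 - `|2 * e - 1| <= Num.max (1 - y) 0 * e + Num.max (1 + y) 0 * (1 - e).
Proof.
move=> /andP[e0 e1]; case: (sgn1_cases (2 * e - 1)) => -[? [_ ->]];
  rewrite !maxElt; case: ltP => ?; case: ltP => ?; nra.
Qed.

Lemma cond_hingeE {e y} : 0 <= e <= 1 -> -1 <= y <= 1 ->
  Num.max (1 - y) 0 * e + Num.max (1 + y) 0 * (1 - e) =
  (1 - `|2 * e - 1|) + `|2 * e - 1| * `|y - sgn1 (2 * e - 1)|.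
Proof.
move=> /andP[e0 e1] /andP[y0 y1].
rewrite !max_l ?subr_ge0 //; last by lra.
case: (sgn1_cases (2 * e - 1)) => -[? [-> ->]].
  by rewrite ler0_norm ?subr_le0 //; ring.
by rewrite ger0_norm; [ring | lra].
Qed.

End pointwise.

Section integral_density_comp.
Local Open Scope classical_set_scope.
Local Open Scope ereal_scope.
Context d1 d2 (X : measurableType d1) (Y : measurableType d2) (R : realType).
Variables (mu : {measure set X -> \bar R}) (E : set X) (g : X -> R) (phi : X -> Y).
Hypotheses (mE : measurable E) (mg : measurable_fun setT g).
Hypotheses (g_ge0 : forall x, (0 <= g x)%R) (mphi : measurable_fun setT phi).
Hypothesis density : forall A, measurable A ->
  mu (E `&` phi @^-1` A) = \int[mu]_(x in phi @^-1` A) (g x)%:E.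

Let mpreimage A : measurable A -> measurable (phi @^-1` A).
Proof. by move=> mA; rewrite -[_ @^-1` _]setTI; exact: mphi. Qed.

Let mindic_comp A : measurable A -> measurable_fun setT (fun x => \1_A (phi x) : R).
Proof.
move=> mA; rewrite (_ : (fun x => _) = \1_(phi @^-1` A)).
  exact/measurable_indic/mpreimage.
by apply/funext => x; rewrite !indicE.
Qed.

Lemma integral_density_indic A : measurable A ->
  \int[mu]_(x in E) (\1_A (phi x))%:E = \int[mu]_x ((\1_A (phi x))%:E * (g x)%:E).
Proof.
move=> mA; rewrite (integral_indic _ mE (mpreimage _ mA)) setIC density //.
by rewrite integral_mkcond epatch_indic; apply: eq_integral => x _ /=; rewrite muleC.
Qed.

Lemma integral_density_nnsfun (h : {nnsfun Y >-> R}) :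
  \int[mu]_(x in E) (h (phi x))%:E = \int[mu]_x ((h (phi x))%:E * (g x)%:E).
Proof.
have h_ge0 r y : 0 <= r%:E * (\1_(h @^-1` [set r]) y)%:E := nnfun_muleindic_ge0 h r y.
have range_ge0 r : r \in range h -> (0 <= r)%R by rewrite inE => -[y _ <-].
have hgE x : (h (phi x))%:E * (g x)%:E =
    \sum_(r \in range h) (r * \1_(h @^-1` [set r]) (phi x))%:E * (g x)%:E.
  by rewrite fimfunE -fsumEFin // ge0_mule_fsuml // => r; rewrite EFinM.
under eq_integral => x _ do rewrite fimfunE -fsumEFin //.
under [RHS]eq_integral => x _ do rewrite hgE.
rewrite !ge0_integral_fsum //; first last.
- by move=> r x _; rewrite EFinM h_ge0.
- move=> r; apply/measurable_funTS/measurable_EFinP.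
  by apply/measurable_funM => //; exact: mindic_comp.
- by move=> r x _; rewrite EFinM mule_ge0 ?h_ge0 // lee_fin.
- move=> r; apply/measurable_EFinP; apply: measurable_funM => //.
  by apply: measurable_funM => //; exact: mindic_comp.
apply: eq_fsbigr => r /range_ge0 r_ge0.
under eq_integral do rewrite EFinM.
under [RHS]eq_integral do rewrite EFinM -muleA.
rewrite !ge0_integralZl_EFin ?integral_density_indic //.
- by move=> x _; rewrite mule_ge0 // lee_fin.
- by apply/measurable_EFinP; apply: measurable_funM => //; exact: mindic_comp.
- by apply/measurable_funTS/measurable_EFinP; exact: mindic_comp.
Qed.

Lemma ge0_integral_density_comp (f : Y -> \bar R) :
  (forall y, 0 <= f y) -> measurable_fun setT f ->
  \int[mu]_(x in E) f (phi x) = \int[mu]_x (f (phi x) * (g x)%:E).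
Proof.
move=> f_ge0 mf; pose h := nnsfun_approx measurableT mf.
have h_cvg x : (EFin \o h ^~ (phi x)) @ \oo --> f (phi x) :=
  cvg_nnsfun_approx _ _ (fun y _ => f_ge0 y) I.
have h_nd x : {homo (fun n => (h n (phi x))%:E) : n m / (n <= m)%N >-> n <= m}.
  by move=> n m nm; rewrite lee_fin; exact/lefP/nd_nnsfun_approx.
have mh n : measurable_fun setT (fun x => (h n (phi x))%:E).
  by apply/measurable_EFinP; exact: measurableT_comp.
have -> : \int[mu]_(x in E) f (phi x) = limn (fun n => \int[mu]_(x in E) (h n (phi x))%:E).
  rewrite -monotone_convergence //.
  - by apply: eq_integral => x _; apply/esym/cvg_lim => //; exact: h_cvg.
  - by move=> n; exact/measurable_funTS/mh.
  - by move=> n x _; rewrite lee_fin.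
have -> : \int[mu]_x (f (phi x) * (g x)%:E) =
    limn (fun n => \int[mu]_x ((h n (phi x))%:E * (g x)%:E)).
  rewrite -monotone_convergence //.
  - by apply: eq_integral => x _; apply/esym/cvg_lim => //; exact/cvgeZr/h_cvg.
  - by move=> n; apply/measurable_EFinP; apply: measurable_funM => //; exact/measurable_EFinP/mh.
  - by move=> n x _; rewrite mule_ge0 ?lee_fin.
  - by move=> x _ n m nm; rewrite lee_wpmul2r ?lee_fin //; exact: h_nd.
by under eq_fun do rewrite integral_density_nnsfun.
Qed.

End integral_density_comp.

Section bounded_measurable.
Context {d} {T : measurableType d} {R : realType}.
Implicit Types u v : T -> R.

Definition bounded_measurable (u : T -> R) :=
  measurable_fun setT u /\ exists M, forall x, `|u x| <= M.

Lemma bounded_cst c : bounded_measurable (fun=> c).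
Proof. by split; [exact: measurable_cst | exists `|c|]. Qed.

Lemma boundedD {u v} : bounded_measurable u -> bounded_measurable v ->
  bounded_measurable (fun x => u x + v x).
Proof.
case=> mu [M uM] [mv [N vN]]; split; first exact: measurable_funD.
by exists (M + N) => x; rewrite (le_trans (ler_normD _ _)) ?lerD.
Qed.

Lemma boundedM {u v} : bounded_measurable u -> bounded_measurable v ->
  bounded_measurable (fun x => u x * v x).
Proof.
case=> mu [M uM] [mv [N vN]]; split; first exact: measurable_funM.
by exists (M * N) => x; rewrite normrM ler_pM.
Qed.

Lemma boundedB {u v} : bounded_measurable u -> bounded_measurable v ->
  bounded_measurable (fun x => u x - v x).
Proof.
move=> bu bv; have := boundedD bu (boundedM (bounded_cst (-1)) bv).
by congr bounded_measurable; apply/funext => x; rewrite mulN1r.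
Qed.

Lemma bounded_norm {u} : bounded_measurable u -> bounded_measurable (fun x => `|u x|).
Proof.
case=> mu [M uM]; split; last by exists M => x; rewrite normr_id.
by apply: measurableT_comp => //; exact: normr_measurable.
Qed.

Lemma bounded_pm1 {u} : measurable_fun setT u -> (forall x, u x = 1 \/ u x = -1) ->
  bounded_measurable u.
Proof.
by move=> mu u_pm1; split => //; exists 1 => x; case: (u_pm1 x) => ->; rewrite ?normrN normr1.
Qed.

Lemma bounded_unit {u} : measurable_fun setT u -> (forall x, -1 <= u x <= 1) ->
  bounded_measurable u.
Proof. by move=> mu u1; split => //; exists 1 => x; rewrite ler_norml. Qed.

End bounded_measurable.

Section excess_risks.
Local Open Scope classical_set_scope.
Context d (T : measurableType d) (R : realType).
Variables (pi : probability (T * bool)%type R) (eta : T -> R).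
Hypothesis eta_cond : cond_prob_version pi eta.

Let meta : measurable_fun setT eta. Proof. by case: eta_cond. Qed.
Let eta01 x : 0 <= eta x <= 1. Proof. by case: eta_cond. Qed.

Section label_split.
Local Open Scope ereal_scope.

Definition label_weight (b : bool) x : R := if b then eta x else (1 - eta x)%R.

Let mweight b : measurable_fun setT (label_weight b).
Proof. by case: b => //; exact: measurable_funB. Qed.

Let weight_ge0 b x : (0 <= label_weight b x)%R.
Proof. by have /andP[? ?] := eta01 x; case: b => //=; rewrite subr_ge0. Qed.

Let mlabel b : measurable (setT `*` [set b] : set (T * bool)).
Proof. exact: measurableX. Qed.

Lemma measure_setX_label (b : bool) A : measurable A ->
  pi (A `*` [set b]) = \int[pi]_(p in A `*` setT) (label_weight b p.1)%:E.
Proof.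
move=> mA; have mAT : measurable (A `*` [set: bool]) by exact: measurableX.
have AT_fin : pi (A `*` setT) < +oo by rewrite (le_lt_trans (probability_le1 _ mAT)) ?ltry.
case: eta_cond => _ _ eta_true; case: b; first exact: eta_true.
have int_fst (u : T -> R) : measurable_fun setT u -> (forall x, `|u x| <= 1)%R ->
    pi.-integrable (A `*` setT) (EFin \o (fun p => u p.1)).
  move=> mu u1; apply: measurable_bounded_integrable => //.
  - by apply/measurable_funTS/measurableT_comp.
  - by exists 1%R; split => // M M1 p _; exact: le_trans (u1 _) (ltW M1).
have -> : A `*` [set false] = A `*` setT `\` setT `*` [set true].
  by apply/seteqP; split => -[x []]; rewrite /setD /setX /=; intuition.
rewrite measureD // -setXI setIT setTI.
rewrite (integralB_EFin mAT (int_fst (fun=> 1%R) _ _) (int_fst eta _ _)) //.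
- by rewrite -(eta_true _ mA) integral_cst // mul1e.
- by move=> x; rewrite normr1.
- by move=> x; have /andP[? ?] := eta01 x; rewrite ger0_norm.
Qed.

Lemma ge0_integral_label (b : bool) (psi : T -> \bar R) :
  (forall x, 0 <= psi x) -> measurable_fun setT psi ->
  \int[pi]_(p in setT `*` [set b]) psi p.1 =
  \int[pi]_p (psi p.1 * (label_weight b p.1)%:E).
Proof.
move=> psi_ge0 mpsi; apply: ge0_integral_density_comp => //.
- exact: measurableT_comp (mweight b) measurable_fst.
- by move=> A mA; rewrite -setXT -setXI setTI setIT; exact: measure_setX_label.
Qed.

Lemma ge0_integral_label_split (u1 u0 : T -> R) :
  measurable_fun setT u1 -> measurable_fun setT u0 ->
  (forall x, 0 <= u1 x)%R -> (forall x, 0 <= u0 x)%R ->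
  \int[pi]_p (if p.2 then u1 p.1 else u0 p.1)%:E =
  \int[pi]_p (u1 p.1 * eta p.1 + u0 p.1 * (1 - eta p.1))%:E.
Proof.
move=> mu1 mu0 u1_ge0 u0_ge0.
have setT_split : [set: T * bool] = setT `*` [set true] `|` setT `*` [set false].
  by apply/seteqP; split => -[x []] //=; [left | right].
rewrite {1}setT_split ge0_integral_setU -?setT_split //; first last.
- by apply/disj_setPS => -[x y] [[_ /= ->]] [].
- by move=> p _; case: p.2; rewrite lee_fin.
- by apply/measurable_EFinP; exact: measurable_fun_if_pair.
under eq_integral => p /[!inE] -[_ /= ->] do [].
under [X in _ + X = _]eq_integral => p /[!inE] -[_ /= ->] do [].
rewrite (ge0_integral_label true (EFin \o u1)) ?(ge0_integral_label false (EFin \o u0));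
  try exact/measurable_EFinP; try by move=> x; rewrite lee_fin.
rewrite -ge0_integralD //; first last.
- by apply/measurable_EFinP; apply: measurable_funM; exact: measurableT_comp.
- by move=> p _; rewrite -EFinM lee_fin mulr_ge0.
- by apply/measurable_EFinP; apply: measurable_funM; exact: measurableT_comp.
- by move=> p _; rewrite -EFinM lee_fin mulr_ge0.
Qed.

End label_split.

Definition EX (u : T -> R) : R := Rintegral pi setT (fun p => u p.1).

Section expectation.
Implicit Types u v : T -> R.

Lemma bounded_integrable {u} : bounded_measurable u ->
  pi.-integrable setT (EFin \o (fun p => u p.1)).
Proof.
case=> mu [M uM]; apply: measurable_bounded_integrable => //.
- by rewrite (le_lt_trans (probability_le1 _ measurableT)) ?ltry.
- exact: measurableT_comp mu measurable_fst.
- by exists M; split => [|N MN p _]; [exact: num_real | exact: le_trans (uM _) (ltW MN)].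
Qed.

Lemma integral_fstE {u} : bounded_measurable u -> (\int[pi]_p (u p.1)%:E)%E = (EX u)%:E.
Proof.
by move=> bu; rewrite /EX /Rintegral fineK // integrable_fin_num // bounded_integrable.
Qed.

Lemma EXD {u v} : bounded_measurable u -> bounded_measurable v ->
  EX (fun x => u x + v x) = EX u + EX v.
Proof. by move=> bu bv; rewrite /EX RintegralD // bounded_integrable. Qed.

Lemma EXZr {u} c : bounded_measurable u -> EX (fun x => u x * c) = EX u * c.
Proof.
move=> bu; rewrite mulrC /EX -RintegralZl ?bounded_integrable //.
by congr Rintegral; apply/funext => p; rewrite mulrC.
Qed.

Lemma le_EX {u v} : bounded_measurable u -> bounded_measurable v ->
  (forall x, u x <= v x) -> EX u <= EX v.
Proof. by move=> bu bv uv; rewrite /EX le_Rintegral // bounded_integrable. Qed.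

Lemma EX_ge0 u : (forall x, 0 <= u x) -> 0 <= EX u.
Proof. by move=> u_ge0; rewrite /EX Rintegral_ge0. Qed.

End expectation.

Definition margin x := `|2 * eta x - 1|.

Definition dist_bayes (f : T -> R) := EX (fun x => `|f x - bayes eta x|).

Definition wdist_bayes (f : T -> R) := EX (fun x => margin x * `|f x - bayes eta x|).

Let margin01 x : 0 <= margin x <= 1.
Proof. by have /andP[? ?] := eta01 x; rewrite normr_ge0 ler_norml; apply/andP; split; lra. Qed.

Let bounded_eta : bounded_measurable eta.
Proof. by split => //; exists 1 => x; have /andP[? ?] := eta01 x; rewrite ger0_norm. Qed.

Let bounded_margin : bounded_measurable margin.
Proof. exact/bounded_norm/boundedB/bounded_cst/boundedM/bounded_eta/bounded_cst. Qed.

Let bayes_pm1 x : bayes eta x = 1 \/ bayes eta x = -1.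
Proof. by rewrite /bayes /sgn1; case: ifP; [left | right]. Qed.

Let mbayes : measurable_fun setT (bayes eta).
Proof.
apply: measurable_fun_ifT => //; apply: measurable_fun_ler => //.
by apply: measurable_funB => //; exact: measurable_funM.
Qed.

Let bounded_bayes : bounded_measurable (bayes eta).
Proof. exact: bounded_pm1 mbayes bayes_pm1. Qed.

Let bounded_wdist {f : T -> R} : bounded_measurable f ->
  bounded_measurable (fun x => margin x * `|f x - bayes eta x|).
Proof. by move=> bf; apply/boundedM/bounded_norm/boundedB/bounded_pm1. Qed.

Lemma riskE {f : T -> R} : measurable_fun setT f -> (forall x, f x = 1 \/ f x = -1) ->
  risk pi f = (EX (fun x => (1 - margin x) / 2) + wdist_bayes f / 2)%:E.
Proof.
move=> mf f_pm1; set S := [set p | ylab p.2 != f p.1].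
set u1 := fun x => (1 - f x) / 2; set u0 := fun x => (1 + f x) / 2.
have mu1 : measurable_fun setT u1 by apply: measurable_funM => //; exact: measurable_funB.
have mu0 : measurable_fun setT u0 by apply: measurable_funM => //; exact: measurable_funD.
have u1_ge0 x : 0 <= u1 x by rewrite /u1; case: (f_pm1 x) => ->; lra.
have u0_ge0 x : 0 <= u0 x by rewrite /u0; case: (f_pm1 x) => ->; lra.
pose g (p : T * bool) := if p.2 then u1 p.1 else u0 p.1.
have indicS p : \1_S p = g p.
  by rewrite indicE /g /u1 /u0 -misclassE // (_ : p \in S = (ylab p.2 != f p.1)) //; exact: asboolb.
have mS : measurable S.
  rewrite (_ : S = g @^-1` [set 1]).
    by rewrite -[_ @^-1` _]setTI; exact: measurable_fun_if_pair.
  apply/seteqP; split => p; rewrite /preimage /= -indicS indicE.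
    by move/mem_set ->.
  by case: (boolP (p \in S)) => [/set_mem // | _] /esym/eqP; rewrite oner_eq0.
have b1 : bounded_measurable (fun x => (1 - margin x) / 2).
  exact/boundedM/bounded_cst/boundedB/bounded_margin/bounded_cst.
have b2 : bounded_measurable (fun x => margin x * `|f x - bayes eta x| / 2).
  exact/boundedM/bounded_cst/bounded_wdist/bounded_pm1.
rewrite /risk -/S -[S]setIT -(integral_indic _ measurableT mS).
under eq_integral do rewrite indicS.
rewrite (ge0_integral_label_split _ _ mu1 mu0 u1_ge0 u0_ge0).
have bw := bounded_wdist (bounded_pm1 mf f_pm1).
rewrite /wdist_bayes -(EXZr _ bw) -(EXD b1 b2) -(integral_fstE (boundedD b1 b2)).
by apply: eq_integral => p _; rewrite (cond_misclassE (eta01 p.1) (f_pm1 p.1)).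
Qed.

Lemma hinge_risk_split {f : T -> R} : measurable_fun setT f ->
  hinge_risk pi f = (\int[pi]_p
    (Num.max (1 - f p.1) 0 * eta p.1 + Num.max (1 + f p.1) 0 * (1 - eta p.1))%:E)%E.
Proof.
move=> mf.
have m1 : measurable_fun setT (fun x => Num.max (1 - f x) 0).
  by apply: measurable_maxr => //; exact: measurable_funB.
have m0 : measurable_fun setT (fun x => Num.max (1 + f x) 0).
  by apply: measurable_maxr => //; exact: measurable_funD.
rewrite -(ge0_integral_label_split _ _ m1 m0) => [|x|x]; try by rewrite le_max lexx orbT.
by apply: eq_integral => -[x []] _; rewrite /ylab /= ?mul1r ?mulN1r ?opprK.
Qed.

Let bounded_one_sub_margin : bounded_measurable (fun x => 1 - margin x).
Proof. exact/boundedB/bounded_margin/bounded_cst. Qed.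

Lemma hinge_riskE {f : T -> R} : measurable_fun setT f -> (forall x, -1 <= f x <= 1) ->
  hinge_risk pi f = (EX (fun x => 1 - margin x) + wdist_bayes f)%:E.
Proof.
move=> mf f1; have bw := bounded_wdist (bounded_unit mf f1).
rewrite hinge_risk_split // /wdist_bayes -(EXD bounded_one_sub_margin bw).
rewrite -(integral_fstE (boundedD bounded_one_sub_margin bw)).
by apply: eq_integral => p _; rewrite (cond_hingeE (eta01 p.1) (f1 p.1)).
Qed.

Lemma wdist_bayes_bayes : wdist_bayes (bayes eta) = 0.
Proof.
rewrite /wdist_bayes (_ : (fun x => _) = fun=> 0); last first.
  by apply/funext => x; rewrite subrr normr0 mulr0.
by rewrite /EX Rintegral_cst // mul0r.
Qed.

Lemma hinge_risk_starE : hinge_risk_star pi = (EX (fun x => 1 - margin x))%:E.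
Proof.
apply/eqP; rewrite eq_le; apply/andP; split.
  apply: ge_ereal_inf; exists (hinge_risk pi (bayes eta)); first by exists (bayes eta).
  rewrite hinge_riskE // ?wdist_bayes_bayes ?addr0 // => x.
  by case: (bayes_pm1 x) => ->; lra.
apply: le_ereal_inf_tmp => _ [g mg <-].
have mhinge : measurable_fun setT
    (fun x => Num.max (1 - g x) 0 * eta x + Num.max (1 + g x) 0 * (1 - eta x)).
  apply: measurable_funD; apply: measurable_funM => //; try exact: measurable_funB.
    by apply: measurable_maxr => //; exact: measurable_funB.
  by apply: measurable_maxr => //; exact: measurable_funD.
rewrite hinge_risk_split // -(integral_fstE bounded_one_sub_margin).
apply: ge0_le_integral => //.
- by move=> p _; rewrite lee_fin subr_ge0; case/andP: (margin01 p.1).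
- by apply/measurable_EFinP; exact: measurableT_comp (proj1 bounded_one_sub_margin) measurable_fst.
- by apply/measurable_EFinP; exact: measurableT_comp mhinge measurable_fst.
- by move=> p _; rewrite lee_fin; exact: cond_hinge_ge.
Qed.

Lemma l1_distE {f : T -> R} : bounded_measurable f -> l1_dist pi eta f = (dist_bayes f)%:E.
Proof.
by move=> bf; rewrite /l1_dist (integral_fstE (bounded_norm (boundedB bf bounded_bayes))).
Qed.

Lemma excess_riskE {f : T -> R} : measurable_fun setT f -> (forall x, f x = 1 \/ f x = -1) ->
  fine (risk pi f - risk pi (bayes eta)) = wdist_bayes f / 2.
Proof.
move=> mf f_pm1; rewrite !riskE // wdist_bayes_bayes mul0r addr0 -EFinB /=.
by rewrite addrC addKr.
Qed.

Lemma excess_hinge_riskE {f : T -> R} : measurable_fun setT f -> (forall x, -1 <= f x <= 1) ->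
  fine (hinge_risk pi f - hinge_risk_star pi) = wdist_bayes f.
Proof. by move=> mf f1; rewrite hinge_riskE // hinge_risk_starE -EFinB /= addrC addKr. Qed.

Lemma dist_bayes_ge0 (f : T -> R) : 0 <= dist_bayes f.
Proof. exact: EX_ge0. Qed.

Lemma wdist_bayes_ge0 (f : T -> R) : 0 <= wdist_bayes f.
Proof. by apply: EX_ge0 => x; rewrite mulr_ge0 //; case/andP: (margin01 x). Qed.

Definition flip_bayes t x := if margin x <= t then - bayes eta x else bayes eta x.

Let mflip t : measurable_fun setT (flip_bayes t).
Proof.
apply: measurable_fun_ifT => //; last exact: measurableT_comp.
exact: measurable_fun_ler (proj1 bounded_margin) (measurable_cst t).
Qed.

Let flip_pm1 t x : flip_bayes t x = 1 \/ flip_bayes t x = -1.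
Proof. by rewrite /flip_bayes; case: ifP => _; case: (bayes_pm1 x) => ->; rewrite ?opprK; auto. Qed.

Lemma dist_bayes_le_flip (f : T -> R) t : 0 < t ->
  measurable_fun setT f -> (forall x, -1 <= f x <= 1) ->
  dist_bayes f <= dist_bayes (flip_bayes t) + wdist_bayes f / t.
Proof.
move=> t0 mf f1; have bf := bounded_unit mf f1.
have bflip := bounded_pm1 (mflip t) (flip_pm1 t).
have bdist := bounded_norm (boundedB bflip bounded_bayes).
have bwdist_t := boundedM (bounded_wdist bf) (bounded_cst t^-1).
rewrite /dist_bayes /wdist_bayes -(EXZr _ (bounded_wdist bf)) -(EXD bdist bwdist_t).
apply: le_EX (boundedD bdist bwdist_t) _ => [|x]; first exact/bounded_norm/boundedB.
have /andP[m0 m1] := margin01 x.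
rewrite /flip_bayes; case: (leP (margin x) t) => [margin_le | t_lt]; last first.
  by rewrite subrr normr0 add0r mulrAC ler_peMl // ler_pdivlMr // mul1r ltW.
have -> : `|- bayes eta x - bayes eta x| = 2.
  by case: (bayes_pm1 x) => ->; rewrite -?opprD ?opprK ?normrN ger0_norm //; lra.
have : `|f x - bayes eta x| <= 2.
  by rewrite ler_norml; have := f1 x; case: (bayes_pm1 x) => ->; lra.
have : 0 <= margin x * `|f x - bayes eta x| / t by rewrite divr_ge0 ?mulr_ge0 // ltW.
lra.
Qed.

Lemma wdist_bayes_flip_le t :
  wdist_bayes (flip_bayes t) <= dist_bayes (flip_bayes t) * t.
Proof.
have bflip := bounded_pm1 (mflip t) (flip_pm1 t).
rewrite /dist_bayes -(EXZr _ (bounded_norm (boundedB bflip bounded_bayes))).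
apply: le_EX => [||x]; [exact: bounded_wdist | exact/boundedM/bounded_cst/bounded_norm/boundedB |].
rewrite mulrC /flip_bayes; case: ifP => margin_le; last by rewrite subrr normr0 !mul0r.
by rewrite ler_wpM2l.
Qed.

Lemma MA_of_MAH kappa : 0 < kappa -> MAH pi eta kappa -> MA pi eta kappa.
Proof.
move=> k0 [c [c0 MAH_c]]; exists (c * 2 `^ kappa^-1); split; first by rewrite mulr_gt0 ?powR_gt0.
move=> f mf f_pm1; have f1 x : -1 <= f x <= 1 by case: (f_pm1 x) => ->; lra.
rewrite (excess_riskE mf f_pm1) -mulrA -powRM ?divr_ge0 ?wdist_bayes_ge0 //.
by rewrite [2 * _]mulrC divfK ?pnatr_eq0 // -(excess_hinge_riskE mf f1); exact: MAH_c.
Qed.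

Lemma MAH_of_MA kappa : 1 <= kappa -> MA pi eta kappa -> MAH pi eta kappa.
Proof.
move=> k1 [c0 [c0_gt0 MA_c0]]; have k0 : 0 < kappa := lt_le_trans ltr01 k1.
pose K := c0 `^ kappa / 2; have K0 : 0 < K by rewrite divr_gt0 ?powR_gt0.
exists (1 + 2 * K); split; first by rewrite addr_gt0 // mulr_gt0.
move=> f mf f1; rewrite (l1_distE (bounded_unit mf f1)) (excess_hinge_riskE mf f1) lee_fin.
apply: le_powR_tradeoff (wdist_bayes_ge0 f) _ => // t t0.
exists (dist_bayes (flip_bayes t)); first exact: dist_bayes_ge0.
split; first exact: dist_bayes_le_flip.
have := MA_c0 _ (mflip t) (flip_pm1 t).
rewrite (l1_distE (bounded_pm1 (mflip t) (flip_pm1 t))) (excess_riskE (mflip t) (flip_pm1 t)).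
rewrite lee_fin => /(powR_le_of_le_mul_powRV k0 (ltW c0_gt0)).
move=> /(_ (divr_ge0 (wdist_bayes_ge0 _) (ler0n _ 2)) (dist_bayes_ge0 _)) /le_trans; apply.
by have := wdist_bayes_flip_le t; have := powR_ge0 c0 kappa; rewrite /K; nra.
Qed.

End excess_risks.

Theorem proposition1 (d : measure_display) (T : measurableType d) (R : realType)
  (pi : probability (T * bool)%type R) (eta : T -> R) (kappa : R) :
  cond_prob_version pi eta -> 1 <= kappa ->
  MA pi eta kappa <-> MAH pi eta kappa.
Proof.
move=> eta_cond k1; split; first exact: MAH_of_MA.
by apply: MA_of_MAH => //; exact: lt_le_trans ltr01 k1.
Qed.
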